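(* For every planar forest $F$, $\Delta(F)=\sum_{I}I\otimes(F-I)$, where the sum runs over all biideals $I$ of $F$ (including $I=\emptyset$ and $I$ equal to the whole vertex set).
   Context: Planar rooted trees have their children linearly ordered left to right; a planar forest is a finite, possibly empty, sequence of planar rooted trees ($1$ = empty forest); $\mathcal{H}$ is the free associative unital algebra over a field $K$ on planar rooted trees, with basis the planar forests and product concatenation. $B^+(F)$ is the tree obtained by grafting the trees of $F$ (in order) on a new common root; $\varepsilon(F)=\delta_{F,1}$. $\Delta:\mathcal{H}\to\mathcal{H}\otimes\mathcal{H}$ is the unique linear map with $\Delta(1)=1\otimes1$, $\Delta(xy)=(x\otimes1)\Delta(y)+\Delta(x)(1\otimes y)-x\otimes y$ and $\Delta(B^+(x))=B^+(x)\otimes 1+(\mathrm{Id}\otimes B^+)\Delta(x)$. Orders on vertices of a nonempty forest $F=t_1\cdots t_n$: $s\geq_{high}s'$ iff $s'=s$ or $s'$ is an ancestor of $s$. If $s,s'$ are incomparable for $\geq_{high}$, $s\geq_{left}s'$ iff either $s\in t_i$, $s'\in t_j$ with $i<j$, or $s,s'\in t_i$ and $s\geq_{left}s'$ in the forest obtained from $t_i$ by deleting its root (recursively). A set $I$ of vertices of $F$ is a biideal if for all vertices $s,s'$: ($s\in I$ and $s'\geq_{high}s$) implies $s'\in I$, and ($s\in I$ and $s'\geq_{left}s$) implies $s'\in I$. For such $I$, $I$ also denotes the planar forest formed by the vertices of $I$ with induced edges and left-right order, and $F-I$ the planar forest formed by the remaining vertices. *)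

From HB Require Import structures.
From mathcomp Require Import all_boot all_algebra.
From mathcomp Require Import finmap monalg.

Set Implicit Arguments.
Unset Strict Implicit.
Unset Printing Implicit Defensive.

Import GRing.Theory.
Local Open Scope ring_scope.

Inductive tree : Type := Node of seq tree.

Definition children (t : tree) : seq tree := let: Node c := t in c.

Fixpoint tree_enc (t : tree) : GenTree.tree unit :=
  let: Node c := t in GenTree.Node 0 (map tree_enc c).

Fixpoint tree_dec (g : GenTree.tree unit) : tree :=
  match g with
  | GenTree.Leaf _ => Node [::]
  | GenTree.Node _ l => Node (map tree_dec l)
  end.

Lemma tree_encK : cancel tree_enc tree_dec.
Proof.
rewrite /cancel; fix IH 1; case=> c /=; congr Node.
elim: c => [|u c IHc] //=; by rewrite IH IHc.
Qed.

HB.instance Definition _ := Countable.copy tree (can_type tree_encK).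

Definition forest := seq tree.
HB.instance Definition _ := Countable.on forest.

Lemma forest_unitm (x y : forest) : x ++ y = [::] -> x = [::] /\ y = [::].
Proof. by case: x; case: y. Qed.

HB.instance Definition _ := Choice_isMonomialDef.Build forest
  (@catA tree) (@cat0s tree) (@cats0 tree) forest_unitm.

(* Basis of H (x) H : pairs of planar forests, multiplied componentwise. *)
Definition pforest := (forest * forest)%type.
HB.instance Definition _ := Countable.on pforest.

Definition pf_one : pforest := ([::], [::]).
Definition pf_mul (x y : pforest) : pforest := (x.1 ++ y.1, x.2 ++ y.2).

Lemma pf_mulA : associative pf_mul.
Proof. by case=> [a b] [c d] [e f]; rewrite /pf_mul /= !catA. Qed.
Lemma pf_mul1 : left_id pf_one pf_mul.
Proof. by case. Qed.
Lemma pf_mul1r : right_id pf_one pf_mul.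
Proof. by case=> a b; rewrite /pf_mul /= !cats0. Qed.
Lemma pf_unitm (x y : pforest) : pf_mul x y = pf_one -> x = pf_one /\ y = pf_one.
Proof.
by case: x y => [[|? ?] [|? ?]] [[|? ?] [|? ?]].
Qed.

HB.instance Definition _ := Choice_isMonomialDef.Build pforest
  pf_mulA pf_mul1 pf_mul1r pf_unitm.

(* The algebra H (free associative algebra on planar trees, basis the  *)
(* planar forests, product = concatenation) and H (x) H (basis the     *)
(* pairs of planar forests, product componentwise).                    *)
Definition H (K : fieldType) := {malg K[forest]}.
Definition HH (K : fieldType) := {malg K[pforest]}.

Definition tens (K : fieldType) (x y : H K) : HH K :=
  \sum_(k <- msupp x) \sum_(l <- msupp y)
     (x@_k * y@_l) *: << ((k, l) : pforest) >>.

Definition Bplus_f (F : forest) : forest := [:: Node F].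

Definition Bplus (K : fieldType) (x : H K) : H K :=
  \sum_(k <- msupp x) x@_k *: << Bplus_f k >>.

Definition IdBplus (K : fieldType) (u : HH K) : HH K :=
  \sum_(k <- msupp u) u@_k *: << ((k.1, Bplus_f k.2) : pforest) >>.

(* Vertices of a planar forest F = t_0 ... t_(n-1) are addressed by    *)
(* nonempty sequences of indices: [:: i] is the root of t_i, and       *)
(* i :: p is the vertex with address p in the forest of children of    *)
(* t_i (p = [:: j] being the j-th child of the root of t_i, etc.).     *)

Fixpoint tverts (t : tree) : seq (seq nat) :=
  let: Node c := t in
  [::] :: (fix fv (i : nat) (l : seq tree) : seq (seq nat) :=
             match l with
             | [::] => [::]
             | u :: l' => [seq i :: p | p <- tverts u] ++ fv i.+1 l'
             end) 0 c.

Definition fverts (F : forest) : seq (seq nat) := behead (tverts (Node F)).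

(* s >=_high s'  iff  s' = s or s' is an ancestor of s *)
Definition ge_high (s s' : seq nat) : bool := prefix s' s.

Fixpoint lex_left (s s' : seq nat) : bool :=
  match s, s' with
  | i :: p, j :: q => (i < j)%N || ((i == j) && lex_left p q)
  | _, _ => false
  end.

Definition ge_left (s s' : seq nat) : bool :=
  [&& ~~ ge_high s s', ~~ ge_high s' s & lex_left s s'].

Definition is_biideal (F : forest) (I : pred (seq nat)) : bool :=
  all (fun s => all (fun s' =>
        (I s && ge_high s' s ==> I s') && (I s && ge_left s' s ==> I s'))
      (fverts F)) (fverts F).

(* The planar forest formed by the vertices (addresses) satisfying P,   *)
(* with induced edges and left-right order. [a] is the address of t.   *)
Fixpoint trestr (P : pred (seq nat)) (a : seq nat) (t : tree) : forest :=
  let: Node c := t in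
  let sub := (fix fr (i : nat) (l : seq tree) : forest :=
                match l with
                | [::] => [::]
                | u :: l' => trestr P (rcons a i) u ++ fr i.+1 l'
                end) 0 c in
  if P a then [:: Node sub] else sub.

Definition frestr (F : forest) (P : pred (seq nat)) : forest :=
  trestr (fun s => (s != [::]) && P s) [::] (Node F).

Definition vset (F : forest) (S : {set 'I_(size (fverts F))}) : pred (seq nat) :=
  fun s => s \in [seq nth [::] (fverts F) (val i) | i in S].
Arguments vset : clear implicits.

From HB Require Import structures.
From mathcomp Require Import all_boot all_algebra.
From mathcomp Require Import finmap monalg.
Import GRing.Theory.

(* Both sides obey the same recursion along F = B^+(c) F'.  For the coproduct,
   multiplicativity and the cocycle property of B^+ give
     Delta(B^+(c) F') = sum_{(I,J) in Delta(F')} B^+(c) I (x) J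
                      + sum_{(I,J) in Delta(c)} I (x) B^+(J) F'.
   For biideals: a biideal of B^+(c) F' containing the root of the first tree
   contains that whole tree (closure under >=_high) and meets F' in an
   arbitrary biideal of F'; one missing that root misses all of F' (closure
   under >=_left, as the first tree lies to the left of F') and is an
   arbitrary biideal of the forest c.  Vertex sets are handled as bit masks
   along the enumeration [fverts], which splits in the same way. *)

Lemma forest_ind (P : forest -> Prop) : P [::] ->
  (forall c F, P c -> P F -> P (Node c :: F)) -> forall F, P F.
Proof.
move=> P0 PS.
have Pcons : forall t F, P F -> P (t :: F).
  fix IH 1; case=> c F PF; apply: PS => //.
  by elim: c => [|u c IHc] //; exact: IH.
by elim=> // t F; apply: Pcons.
Qed.

Fixpoint trestr_seq (P : pred (seq nat)) (a : seq nat) (i : nat) (F : forest) : forest :=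
  if F is t :: F' then trestr P (rcons a i) t ++ trestr_seq P a i.+1 F' else [::].

Lemma trestrE P a c : trestr P a (Node c) =
  if P a then [:: Node (trestr_seq P a 0 c)] else trestr_seq P a 0 c.
Proof.
(* [trestr] is defined in ring_scope: its first child index is [0%R]. *)
rewrite /= (_ : 0%R = 0%N) //; case: (P a); [congr [:: Node _]|].
all: by elim: c 0%N => //= u c IH i; rewrite IH.
Qed.

Fixpoint tverts_seq (i : nat) (F : forest) : seq (seq nat) :=
  if F is t :: F' then [seq i :: p | p <- tverts t] ++ tverts_seq i.+1 F' else [::].

Lemma tvertsE c : tverts (Node c) = [::] :: tverts_seq 0 c.
Proof. by []. Qed.

Lemma fvertsE F : fverts F = tverts_seq 0 F.
Proof. by rewrite /fverts tvertsE. Qed.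

(* The address in [t :: F] of the vertex with address [s] in [F]. *)
Definition shift_root (s : seq nat) : seq nat := if s is i :: p then i.+1 :: p else [::].
Arguments shift_root !s /.

Lemma shift_root_inj : injective shift_root.
Proof. by case=> [|i p] [|j q] //= [-> ->]. Qed.

Lemma tverts_seqS i F : tverts_seq i.+1 F = map shift_root (tverts_seq i F).
Proof. by elim: F i => //= t F IH i; rewrite IH map_cat -map_comp. Qed.

Lemma fverts_cons c F : fverts (Node c :: F) =
  map (cons 0%N) ([::] :: fverts c) ++ map shift_root (fverts F).
Proof. by rewrite !fvertsE -tvertsE /= tverts_seqS. Qed.

Lemma fverts_neq0 F s : s \in fverts F -> s != [::].
Proof.
rewrite fvertsE; elim: F 0%N => //= t F IH i.
by rewrite mem_cat => /orP[/mapP[p _ ->] //|]; exact: IH.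
Qed.

Lemma uniq_fverts F : uniq (fverts F).
Proof.
elim/forest_ind: F => // c F uc uF.
have cons0_inj : injective (cons 0%N) by move=> x y [].
rewrite fverts_cons cat_uniq (map_inj_uniq cons0_inj) (map_inj_uniq shift_root_inj).
rewrite /= uc uF andbT (negPf (contraL (@fverts_neq0 c _) _)) ?eqxx //=.
rewrite andbT; apply/hasPn => _ /mapP[y _ ->]; rewrite in_cons negb_or.
by apply/andP; split; [case: y | apply/mapP => -[x _]; case: y].
Qed.

Lemma eq_trestr_seq F : forall P Q a b i j,
  (forall k s, P (rcons a (i + k) ++ s) = Q (rcons b (j + k) ++ s)) ->
  trestr_seq P a i F = trestr_seq Q b j F.
Proof.
elim/forest_ind: F => // c F IHc IHF P Q a b i j PQ; cbn [trestr_seq]; rewrite !trestrE.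
have -> : P (rcons a i) = Q (rcons b j) by have := PQ 0%N [::]; rewrite !addn0 !cats0.
have -> : trestr_seq P (rcons a i) 0 c = trestr_seq Q (rcons b j) 0 c.
  by apply: IHc => k s; have := PQ 0%N (k :: s); rewrite !addn0 !cat_rcons.
by rewrite (IHF _ Q _ b _ j.+1) // => k s; have := PQ k.+1 s; rewrite !addnS.
Qed.

Lemma frestrE F P : frestr F P = trestr_seq (fun s => (s != [::]) && P s) [::] 0 F.
Proof. by rewrite /frestr trestrE. Qed.

Lemma eq_frestr F P Q : {in predC1 [::], P =1 Q} -> frestr F P = frestr F Q.
Proof. by move=> PQ; rewrite !frestrE; apply: eq_trestr_seq => k s /=; rewrite PQ. Qed.

Lemma frestr_cons c F P : frestr (Node c :: F) P =
  (if P [:: 0%N] then [:: Node (frestr c (fun p => P (0%N :: p)))]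
   else frestr c (fun p => P (0%N :: p))) ++ frestr F (fun p => P (shift_root p)).
Proof.
rewrite !frestrE; cbn [trestr_seq]; rewrite trestrE /=; congr (_ ++ _); last exact: eq_trestr_seq.
by rewrite (@eq_trestr_seq c _ (fun s => (s != [::]) && P (0%N :: s)) _ [::] _ 0).
Qed.

Lemma frestr_id F P : all P (fverts F) -> frestr F P = F.
Proof.
elim/forest_ind: F P => // c F IHc IHF P.
rewrite frestr_cons fverts_cons all_cat !all_map /= => /andP[/andP[-> ?] ?].
by rewrite IHc // IHF.
Qed.

Lemma frestr_pred0 F P : ~~ has P (fverts F) -> frestr F P = [::].
Proof.
elim/forest_ind: F P => // c F IHc IHF P.
rewrite frestr_cons fverts_cons has_cat !has_map /= !negb_or => /andP[/andP[P0 ?] ?].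
by rewrite (negPf P0) IHc // IHF.
Qed.

Definition biideal_cond (P : pred (seq nat)) (s s' : seq nat) : bool :=
  (P s && ge_high s' s ==> P s') && (P s && ge_left s' s ==> P s').

Definition biideal_on (V : seq (seq nat)) (P : pred (seq nat)) : bool :=
  all (fun s => all (biideal_cond P s) V) V.

Lemma is_biidealE F P : is_biideal F P = biideal_on (fverts F) P.
Proof. by []. Qed.

Lemma eq_in_biideal_on {V P Q} : {in V, P =1 Q} -> biideal_on V P = biideal_on V Q.
Proof.
move=> PQ; apply: eq_in_all => s sV; apply: eq_in_all => s' s'V.
by rewrite /biideal_cond !PQ.
Qed.

Lemma biideal_on_all V P : all P V -> biideal_on V P.
Proof.
move/allP=> PV; apply/allP => s _; apply/allP => s' s'V.
by rewrite /biideal_cond (PV s' s'V) !implybT.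
Qed.

Lemma biideal_on_pred0 V P : ~~ has P V -> biideal_on V P.
Proof.
move/hasPn=> nPV; apply/allP => s sV; apply/allP => s' _.
by rewrite /biideal_cond (negPf (nPV s sV)).
Qed.

Lemma biideal_cond_refl P s : biideal_cond P s s.
Proof. by rewrite /biideal_cond; apply/andP; split; apply/implyP => /andP[]. Qed.

Lemma biideal_on_cat X Y P : biideal_on (X ++ Y) P =
  [&& biideal_on X P, biideal_on Y P, all (fun s => all (biideal_cond P s) Y) X &
      all (fun s => all (biideal_cond P s) X) Y].
Proof.
rewrite /biideal_on all_cat.
rewrite !(eq_all (fun s => all_cat (biideal_cond P s) X Y)) -!/(predI _ _) !all_predI.
by case: (all _ X); case: (all _ X); case: (all _ Y); case: (all _ Y).
Qed.

Lemma biideal_on_map f V P :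
  (forall s s', ge_high (f s) (f s') = ge_high s s') ->
  (forall s s', ge_left (f s) (f s') = ge_left s s') ->
  biideal_on (map f V) P = biideal_on V (fun s => P (f s)).
Proof.
move=> fh fl; rewrite /biideal_on all_map; apply: eq_all => s /=; rewrite all_map.
by apply: eq_all => s'; rewrite /biideal_cond /= fh fl.
Qed.

Lemma ge_high_cons0 s s' : ge_high (0%N :: s) (0%N :: s') = ge_high s s'.
Proof. by rewrite /ge_high prefix_cons eqxx. Qed.

Lemma ge_left_cons0 s s' : ge_left (0%N :: s) (0%N :: s') = ge_left s s'.
Proof. by rewrite /ge_left !ge_high_cons0. Qed.

Lemma ge_high_shift s s' : ge_high (shift_root s) (shift_root s') = ge_high s s'.
Proof. by case: s s' => [|i s] [|j s']. Qed.

Lemma ge_left_shift s s' : ge_left (shift_root s) (shift_root s') = ge_left s s'.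
Proof. by rewrite /ge_left !ge_high_shift; case: s s' => [|i s] [|j s']. Qed.

Lemma all_implyb (T : Type) (b : bool) (a : pred T) s :
  all (fun x => b ==> a x) s = b ==> all a s.
Proof. by case: b => //=; rewrite all_predT. Qed.

Lemma all_all_implyb (T U : Type) (a : pred T) (b : pred U) s t :
  all (fun x => all (fun y => a x ==> b y) t) s = has a s ==> all b t.
Proof.
elim: s => //= x s IH; rewrite all_implyb IH.
by case: (a x); case: (has a s); case: (all b t).
Qed.

(* Every vertex of the first tree lies to the left of every vertex of [F]. *)
Lemma biideal_on_cons c F P : biideal_on (fverts (Node c :: F)) P =
 [&& P [:: 0%N] ==> all (fun p => P (0%N :: p)) (fverts c),
     biideal_on (fverts c) (fun p => P (0%N :: p)),
     biideal_on (fverts F) (fun p => P (shift_root p)) &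
     has (fun p => P (shift_root p)) (fverts F) ==>
        P [:: 0%N] && all (fun p => P (0%N :: p)) (fverts c)].
Proof.
rewrite fverts_cons biideal_on_cat (biideal_on_map _ _ _ ge_high_cons0 ge_left_cons0).
rewrite (biideal_on_map _ _ _ ge_high_shift ge_left_shift) -cat1s biideal_on_cat.
set Pc := fun p => P (0%N :: p).
have -> : biideal_on [:: [::]] Pc by rewrite /biideal_on /= biideal_cond_refl.
have -> : all (fun s => all (biideal_cond Pc s) (fverts c)) [:: [::]] =
          (Pc [::] ==> all Pc (fverts c)).
  rewrite /= andbT -all_implyb; apply: eq_all => s'.
  by rewrite /biideal_cond /ge_left /ge_high prefix0s /= andbT andbF implyFb andbT.
have -> : all (fun s => all (biideal_cond Pc s) [:: [::]]) (fverts c).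
  apply/allP => -[|i s] _ /=; rewrite andbT ?biideal_cond_refl //.
  by rewrite /biideal_cond /ge_left /ge_high /= ?andbF.
have -> : all (fun s => all (biideal_cond P s) [seq shift_root i | i <- fverts F])
            [seq 0%N :: i | i <- [:: [::]] ++ fverts c].
  apply/allP => _ /mapP[w _ ->]; apply/allP => _ /mapP[[|j y] _ ->];
  by rewrite /biideal_cond /ge_left /ge_high /= ?andbF.
have cond_shift0 y w :
    biideal_cond P (shift_root y) (0%N :: w) = P (shift_root y) ==> Pc w.
  by case: y => [|j y]; rewrite /biideal_cond /ge_left /ge_high /= ?andbF ?andbT.
have -> : all (fun s => all (biideal_cond P s) [seq 0%N :: i | i <- [:: [::]] ++ fverts c])
            [seq shift_root i | i <- fverts F] =
          all (fun y => all (fun w => P (shift_root y) ==> Pc w) ([::] :: fverts c))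
            (fverts F).
  rewrite all_map; apply: eq_all => y /=; rewrite cond_shift0 all_map.
  by congr (_ && _); apply: eq_all => w /=; rewrite cond_shift0.
by rewrite all_all_implyb /= andbT (andbC (biideal_on _ _)) -!andbA.
Qed.

Fixpoint masks (n : nat) : seq bitseq :=
  if n is n'.+1 then [seq true :: m | m <- masks n'] ++ [seq false :: m | m <- masks n']
  else [:: [::]].

Lemma mem_masks n m : (m \in masks n) = (size m == n).
Proof.
elim: n m => [|n IH] [|b m] //=; rewrite mem_cat.
  by apply/negbTE; rewrite negb_or; apply/andP; split; apply/mapP => -[].
apply/idP/idP => [/orP[]/mapP[x + [_ ->]]|]; rewrite ?IH //.
by rewrite eqSS -IH => mn; apply/orP; case: b; [left|right]; apply/mapP; exists m.
Qed.

Lemma uniq_masks n : uniq (masks n).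
Proof.
elim: n => //= n IH; rewrite cat_uniq !map_inj_uniq ?IH //; try by move=> x y [].
by rewrite andbT; apply/hasPn => _ /mapP[m _ ->]; apply/mapP => -[].
Qed.

Lemma size_masks n m : m \in masks n -> size m = n.
Proof. by rewrite mem_masks => /eqP. Qed.

Definition mask_pred (V : seq (seq nat)) (m : bitseq) : pred (seq nat) :=
  fun s => s \in mask m V.

Lemma all_mask_pred V m : uniq V -> size m = size V ->
  all (mask_pred V m) V = (m == nseq (size V) true).
Proof.
move=> uV sm; apply/idP/eqP => [/allP mV|->]; last first.
  by apply/allP => s sV; rewrite /mask_pred mask_true.
have : size V <= size (mask m V) by apply: uniq_leq_size => // s /mV.
rewrite size_mask // => le_V; have : count id m == size m.
  by rewrite eqn_leq count_size sm le_V.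
rewrite -all_count => /allP mT; rewrite -sm; apply/all_pred1P/allP => b /mT.
by case: b.
Qed.

Lemma has_mask_pred V m : size m = size V ->
  has (mask_pred V m) V = (m != nseq (size V) false).
Proof.
move=> sm; apply/idP/idP => [/hasP[s _]|nz].
  by apply: contraTneq => ->; rewrite /mask_pred mask_false.
case E: (mask m V) => [|h t].
  have : ~~ has id m by rewrite has_count -(size_mask sm) E.
  rewrite -all_predC => /allP mF; have : all (pred1 false) m.
    by apply/allP => b /mF; case: b.
  by move=> /all_pred1P em; rewrite -sm -em eqxx in nz.
apply/hasP; exists h; last by rewrite /mask_pred E mem_head.
by apply: (@mem_mask _ _ m); rewrite E mem_head.
Qed.

Lemma big_masksS (R : Type) (idx : R) (op : Monoid.law idx) n (P : pred bitseq)
    (h : bitseq -> R) :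
  \big[op/idx]_(m <- masks n.+1 | P m) h m =
  op (\big[op/idx]_(m <- masks n | P (true :: m)) h (true :: m))
     (\big[op/idx]_(m <- masks n | P (false :: m)) h (false :: m)).
Proof. by rewrite /= big_cat !big_map. Qed.

Lemma big_masksD (R : Type) (idx : R) (op : Monoid.law idx) a b (P : pred bitseq)
    (h : bitseq -> R) :
  \big[op/idx]_(m <- masks (a + b) | P m) h m =
  \big[op/idx]_(x <- masks a) \big[op/idx]_(y <- masks b | P (x ++ y)) h (x ++ y).
Proof.
elim: a P h => [|a IH] P h; first by rewrite add0n /= big_seq1.
by rewrite addSn !big_masksS !IH.
Qed.

Lemma big_set_masks (R : Type) (idx : R) (op : Monoid.com_law idx) n
    (P : pred {set 'I_n}) (h : {set 'I_n} -> R) :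
  \big[op/idx]_(S : {set 'I_n} | P S) h S =
  \big[op/idx]_(m <- masks n | P [set i : 'I_n | nth false m i])
     h [set i : 'I_n | nth false m i].
Proof.
rewrite -(big_map (fun m => [set i : 'I_n | nth false m i]) P h).
apply: perm_big; apply: uniq_perm; first exact: index_enum_uniq.
  rewrite map_inj_in_uniq ?uniq_masks // => m1 m2 /size_masks s1 /size_masks s2 e.
  apply: (@eq_from_nth _ false); first by rewrite s1 s2.
  by move=> i; rewrite s1 => lt_in; move/setP/(_ (Ordinal lt_in)): e; rewrite !inE.
move=> S; rewrite mem_index_enum; symmetry; apply/mapP.
exists [seq i \in S | i <- enum 'I_n]; first by rewrite mem_masks size_map size_enum_ord.
by apply/setP => i; rewrite inE (nth_map i) ?size_enum_ord // nth_ord_enum.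
Qed.

Lemma vset_mask F m : size m = size (fverts F) ->
  vset F [set i : 'I_(size (fverts F)) | nth false m i] =1 mask_pred (fverts F) m.
Proof.
move=> sm s; rewrite /vset /mask_pred in_mask ?uniq_fverts //.
apply/mapP/andP => [[i]|[sV ms]].
  rewrite mem_enum inE => mi ->.
  by split; [exact/mem_nth/ltn_ord | rewrite index_uniq ?uniq_fverts ?ltn_ord].
have iV : index s (fverts F) < size (fverts F) by rewrite index_mem.
by exists (Ordinal iV); rewrite ?mem_enum ?inE ?nth_index.
Qed.

Definition fcut (F : forest) (P : pred (seq nat)) : pforest :=
  (frestr F P, frestr F (predC P)).

Lemma fcut_mask_true F :
  fcut F (mask_pred (fverts F) (nseq (size (fverts F)) true)) = (F, [::]).
Proof.
rewrite /fcut /mask_pred mask_true // frestr_id; last exact/allP.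
by rewrite frestr_pred0 //; apply/hasPn => s /= ->.
Qed.

Lemma fcut_mask_false F :
  fcut F (mask_pred (fverts F) (nseq (size (fverts F)) false)) = ([::], F).
Proof.
rewrite /fcut /mask_pred mask_false frestr_pred0; last exact/hasPn.
by rewrite frestr_id //; exact/allP.
Qed.

Section MaskCons.
Context {c F : forest} {m0 m2 : bitseq}.
Hypotheses (size_m0 : size m0 = size (fverts c)) (size_m2 : size m2 = size (fverts F)).
Let V := fverts (Node c :: F).
Let Pc := mask_pred (fverts c) m0.
Let PF := mask_pred (fverts F) m2.

Section Root.
Variable b : bool.
Let P := mask_pred V (b :: m0 ++ m2).

Lemma mask_pred_cons s : P s =
  (s \in map (cons 0%N) (mask (b :: m0) ([::] :: fverts c))) ||
  (s \in map shift_root (mask m2 (fverts F))).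
Proof.
rewrite /P /mask_pred /V fverts_cons -cat_cons mask_cat; last by rewrite /= size_map size_m0.
by rewrite mem_cat -!map_mask.
Qed.

Lemma mask_pred_cons0 p : P (0%N :: p) = (b && (p == [::])) || Pc p.
Proof.
have cons0_inj : injective (cons 0%N) by move=> x y [].
rewrite mask_pred_cons (mem_map cons0_inj) (_ : (0%N :: p \in _) = false) ?orbF.
  by case: b; rewrite /= ?in_cons.
by apply/mapP => -[[|j y] _].
Qed.

Lemma mask_pred_shift p : P (shift_root p) = PF p.
Proof.
rewrite mask_pred_cons (mem_map shift_root_inj) (_ : (shift_root p \in _) = false) //.
by apply/mapP => -[y _]; case: p.
Qed.

Lemma mask_pred_root : P [:: 0%N] = b.
Proof.
rewrite mask_pred_cons0 eqxx andbT; case: b => //=.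
by apply/negP => /mem_mask /fverts_neq0; rewrite eqxx.
Qed.

Lemma mask_pred_cons0_neq0 : {in predC1 [::], (fun p => P (0%N :: p)) =1 Pc}.
Proof. by move=> p /negPf p0; rewrite mask_pred_cons0 p0 andbF. Qed.

Lemma biideal_on_mask_cons : biideal_on V P =
  [&& b ==> all Pc (fverts c), biideal_on (fverts c) Pc, biideal_on (fverts F) PF &
      has PF (fverts F) ==> b && all Pc (fverts c)].
Proof.
have in_c : {in fverts c, (fun p => P (0%N :: p)) =1 Pc}.
  by move=> p /fverts_neq0 p0; apply: mask_pred_cons0_neq0.
rewrite /V biideal_on_cons mask_pred_root (eq_in_all in_c) (eq_in_biideal_on in_c).
rewrite (eq_has mask_pred_shift).
by rewrite (eq_in_biideal_on (in1W mask_pred_shift)).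
Qed.

Lemma fcut_mask_cons : fcut (Node c :: F) P =
  ((if b then [:: Node (fcut c Pc).1] else (fcut c Pc).1) ++ (fcut F PF).1,
   (if b then (fcut c Pc).2 else [:: Node (fcut c Pc).2]) ++ (fcut F PF).2).
Proof.
have in_c := mask_pred_cons0_neq0.
have in_F : {in predC1 [::], (fun p => P (shift_root p)) =1 PF}.
  by move=> p _; rewrite mask_pred_shift.
have in_cC : {in predC1 [::], (fun p => ~~ P (0%N :: p)) =1 predC Pc}.
  by move=> p p0 /=; rewrite in_c.
have in_FC : {in predC1 [::], (fun p => ~~ P (shift_root p)) =1 predC PF}.
  by move=> p p0 /=; rewrite in_F.
rewrite /fcut !frestr_cons /= mask_pred_root.
rewrite (eq_frestr _ _ _ in_c) (eq_frestr _ _ _ in_F).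
by rewrite (eq_frestr _ _ _ in_cC) (eq_frestr _ _ _ in_FC); case: b.
Qed.
End Root.

Lemma biideal_on_mask_true :
  biideal_on V (mask_pred V (true :: m0 ++ m2)) =
  (m0 == nseq (size (fverts c)) true) && biideal_on (fverts F) PF.
Proof.
rewrite biideal_on_mask_cons /= all_mask_pred ?uniq_fverts //.
case: eqP => [m0T|]; rewrite //= implybT andbT.
by rewrite biideal_on_all // all_mask_pred ?uniq_fverts // m0T.
Qed.

Lemma biideal_on_mask_false :
  biideal_on V (mask_pred V (false :: m0 ++ m2)) =
  (m2 == nseq (size (fverts F)) false) && biideal_on (fverts c) Pc.
Proof.
rewrite biideal_on_mask_cons /= implybF has_mask_pred // negbK.
case: eqP => [m2F|]; rewrite ?andbF // andbT andbC.
by rewrite biideal_on_pred0 // has_mask_pred // m2F eqxx.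
Qed.
End MaskCons.

(* The terms (I, F - I) produced by the recursion F = B^+(c) F' of the
   coproduct: each cut (I, J) of F' gives (B^+(c) I, J), and each cut (I, J)
   of c gives (I, B^+(J) F'). *)
Fixpoint tcuts (t : tree) : seq pforest :=
  let: Node c := t in
  (fix cuts_seq (F : forest) : seq pforest :=
     if F is u :: F' then
       [seq (u :: q.1, q.2) | q <- cuts_seq F'] ++ [seq (p.1, Node p.2 :: F') | p <- tcuts u]
     else [:: ([::], [::])]) c.

Definition cuts (F : forest) : seq pforest := tcuts (Node F).

Lemma cuts_cons c F : cuts (Node c :: F) =
  [seq (Node c :: q.1, q.2) | q <- cuts F] ++ [seq (p.1, Node p.2 :: F) | p <- cuts c].
Proof. by []. Qed.

Section BigCuts.
Context {R : Type} {idx : R} (op : Monoid.com_law idx).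

Lemma big_pred1_uniq (I : eqType) (r : seq I) j (h : I -> R) :
  uniq r -> j \in r -> \big[op/idx]_(i <- r | i == j) h i = h j.
Proof. by move=> ur jr; rewrite -big_filter filter_pred1_uniq // big_seq1. Qed.

Lemma big_biideal_masks F (g : pforest -> R) :
  \big[op/idx]_(m <- masks (size (fverts F)) |
                biideal_on (fverts F) (mask_pred (fverts F) m))
     g (fcut F (mask_pred (fverts F) m)) =
  \big[op/idx]_(p <- cuts F) g p.
Proof.
elim/forest_ind: F g => [|c F IHc IHF] g; first by rewrite /= !big_seq1.
have -> : size (fverts (Node c :: F)) = (size (fverts c) + size (fverts F)).+1.
  by rewrite fverts_cons size_cat !size_map.
rewrite big_masksS !big_masksD cuts_cons big_cat !big_map.
congr (op _ _).
- rewrite -IHF.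
  under eq_big_seq => x /size_masks sx.
    rewrite big_mkcond.
    under eq_bigr do rewrite (biideal_on_mask_true sx) (fcut_mask_cons sx).
    rewrite -big_mkcond big_mkcondl.
    over.
  rewrite exchange_big; apply: eq_bigr => y _.
  rewrite -big_mkcond big_pred1_uniq ?uniq_masks ?mem_masks ?size_nseq //.
  by rewrite fcut_mask_true.
- rewrite -IHc [RHS]big_mkcond; apply: eq_big_seq => x /size_masks sx.
  rewrite big_mkcond.
  under eq_big_seq => y /size_masks sy do
    rewrite (biideal_on_mask_false sx sy) (fcut_mask_cons sx).
  rewrite -big_mkcond big_andbC big_mkcondl.
  by rewrite big_pred1_uniq ?uniq_masks ?mem_masks ?size_nseq // fcut_mask_false cats0.
Qed.
End BigCuts.

Local Open Scope ring_scope.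

Section Coproduct.
Variable K : fieldType.

Lemma tensUU (a b : forest) : tens << a >> << b >> = << ((a, b) : pforest) >> :> HH K.
Proof. by rewrite /tens !msuppU1 !big_seq_fset1 !mcoeffUU mulr1 scale1r. Qed.

Lemma H_mulUU (a b : forest) : << a >> * << b >> = << a ++ b >> :> H K.
Proof. by rewrite malgM_def fgmulUU mulr1. Qed.

Lemma HH_mulUU (a b : pforest) :
  << a >> * << b >> = << ((a.1 ++ b.1, a.2 ++ b.2) : pforest) >> :> HH K.
Proof. by rewrite malgM_def fgmulUU mulr1. Qed.

Lemma BplusU c : Bplus << c >> = << Bplus_f c >> :> H K.
Proof. by rewrite /Bplus msuppU1 big_seq_fset1 mcoeffUU scale1r. Qed.

Lemma IdBplus_sum (r : seq pforest) :
  IdBplus (\sum_(p <- r) << p >>) = \sum_(p <- r) << ((p.1, Bplus_f p.2) : pforest) >> :> HH K.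
Proof.
pose h (k : pforest) : HH K := << ((k.1, Bplus_f k.2) : pforest) >>.
have IdBplusE u : IdBplus u = mmap (@malgC pforest K) h u.
  by rewrite /IdBplus mmapE; apply: eq_bigr => k _; rewrite mul_malgC.
by rewrite IdBplusE raddf_sum; apply: eq_bigr => p _; rewrite /= mmapU mul_malgC scale1r.
Qed.

Variable Delta : {linear H K -> HH K}.
Hypotheses (Delta1 : Delta 1 = tens 1 1)
  (DeltaM : forall x y : H K,
      Delta (x * y) = tens x 1 * Delta y + Delta x * tens 1 y - tens x y)
  (DeltaB : forall x : H K, Delta (Bplus x) = tens (Bplus x) 1 + IdBplus (Delta x)).

Lemma Delta_cuts F : Delta << F >> = \sum_(p <- cuts F) << p >>.
Proof.
have oneE : 1 = << [::] >> :> H K by [].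
elim/forest_ind: F => [|c F IHc IHF]; first by rewrite -oneE Delta1 oneE tensUU big_seq1.
have DeltaBc : Delta << [:: Node c] >> = << (([:: Node c], [::]) : pforest) >> +
    \sum_(p <- cuts c) << ((p.1, [:: Node p.2]) : pforest) >>.
  by rewrite -[[:: Node c]]/(Bplus_f c) -BplusU DeltaB IHc IdBplus_sum BplusU tensUU.
rewrite -cat1s -H_mulUU DeltaM DeltaBc IHF oneE !tensUU.
rewrite mulr_sumr mulrDl mulr_suml cuts_cons big_cat !big_map /= HH_mulUU /=.
rewrite [LHS]addrC [LHS]addrCA addKr; congr (_ + _); apply: eq_bigr => p _; rewrite HH_mulUU //=.
by rewrite cats0.
Qed.
End Coproduct.

Theorem proposition12 (K : fieldType) (Delta : {linear H K -> HH K}) :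
  Delta 1 = tens 1 1 ->
  (forall x y : H K,
      Delta (x * y) = tens x 1 * Delta y + Delta x * tens 1 y - tens x y) ->
  (forall x : H K, Delta (Bplus x) = tens (Bplus x) 1 + IdBplus (Delta x)) ->
  forall F : forest,
    Delta << F >> =
    \sum_(S : {set 'I_(size (fverts F))} | is_biideal F (vset F S))
       tens << (frestr F (vset F S)) >> << (frestr F (predC (vset F S))) >>.
Proof.
move=> Delta1 DeltaM DeltaB F.
rewrite (Delta_cuts _ _ Delta1 DeltaM DeltaB) -(big_biideal_masks +%R F (fun p => << p >>)).
rewrite big_set_masks.
rewrite big_mkcond [RHS]big_mkcond; apply: eq_big_seq => m /size_masks sm.
have Vm := vset_mask F m sm.
have VmC : predC (vset F _) =1 predC (mask_pred (fverts F) m) := fun s => congr1 negb (Vm s).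
rewrite is_biidealE (eq_in_biideal_on (in1W Vm)) tensUU.
by rewrite (eq_frestr _ _ _ (in1W Vm)) (eq_frestr _ _ _ (in1W VmC)).
Qed.
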